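(* Assume $\lambda_{i_0}\neq0$ and $\mu_{j_0}\neq0$ for some $i_0\ge0$, $j_0\ge1$. For $p\ge1$ put $\widehat E_{-i_0,p}:=\lambda_{i_0}^{-1}\big(\lambda_{i_0}\mu_p-E_{-i_0,p}\big)$, and for $p\ge 0$ put $\widehat E_{-p,j_0}:=\mu_{j_0}^{-1}\big(E_{-p,j_0}-\lambda_p\mu_{j_0}\big)$. Let $\mathcal C$ be the commutative subalgebra of $\widehat{\mathcal A}$ generated by $a(-r)$ ($r\ge1$) and $a^*(-s)$ ($s\ge0$, $s\ne i_0$), regarded as a polynomial algebra in these variables. Then for all $k\ge 0$: (1) for every $\Phi\in\mathcal C$ and $p\ge1$: $\widehat E_{-i_0,p}\,\Phi\, I^k w=\Big(\frac{\partial\Phi}{\partial a(-p)}\Big)(I+1)^k w$; (2) for every $\Phi^*\in\mathcal C$ lying in the subalgebra generated by the $a^*(-s)$ ($s\ge0$, $s\ne i_0$) only, and every $p\ge0$: $\widehat E_{-p,j_0}\,\Phi^*\, I^k w=\Big(\frac{\partial\Phi^*}{\partial a^*(-p)}\Big)(I-1)^k w$ (the derivative being $0$ if $p=i_0$).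
   Context: Let $\widehat{\mathcal A}$ be the Weyl algebra: the unital associative complex algebra generated by $a(r),a^*(r)$ ($r\in\mathbb Z$) with relations $[a(r),a(s)]=[a^*(r),a^*(s)]=0$ and $[a(r),a^*(s)]=\delta_{r+s,0}$. Fix integers $n\ge 0$, $m\ge 1$, $\bm\lambda=(\lambda_0,\dots,\lambda_n)\in\mathbb C^{n+1}$, $\bm\mu=(\mu_1,\dots,\mu_m)\in\mathbb C^m$, and set $\lambda_i=0$ for $i>n$, $\mu_j=0$ for $j>m$. The Whittaker module $M_1(\bm\lambda,\bm\mu)=\widehat{\mathcal A}/\mathcal I$, where $\mathcal I$ is the left ideal generated by $a(i)-\lambda_i$ ($i\ge 0$) and $a^*(j)-\mu_j$ ($j\ge 1$); $w=w_{\bm\lambda,\bm\mu}$ denotes the image of $1$. Normal ordering: $:a(i)a^*(j):$ equals $a^*(j)a(i)$ if $i\ge 0$ and $j\le 0$, and equals $a(i)a^*(j)$ otherwise. For $i,j\in\mathbb Z$, $E_{i,j}:=\,:a(-i)a^*(j):$, and $I:=\sum_{j\in\mathbb Z}E_{j,j}$, a well-defined operator on $M_1(\bm\lambda,\bm\mu)$ commuting with all $E_{i,j}$. *)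

From HB Require Import structures.
From mathcomp Require Import all_boot all_order all_algebra.
From mathcomp Require Import mpoly.
From mathcomp Require Import complex.
From mathcomp Require Import Rstruct.
Set Implicit Arguments. Unset Strict Implicit. Unset Printing Implicit Defensive.
Import Order.TTheory GRing.Theory Num.Theory.
Local Open Scope ring_scope.

Definition CC : fieldType := complex Rdefinitions.R.

(* Generators of the commutative subalgebra: [inl r] stands for a(-r),
   [inr s] stands for a*(-s). *)
Definition genC := (nat + nat)%type.

Section Weyl.
Variable V : lmodType CC.
Variables (a astar : int -> V -> V).

(* normal ordered product  E_{i,j} = :a(-i) a*(j): as an operator on V *)
Definition Eop (i j : int) (v : V) : V :=
  if (0 <= - i) && (j <= 0) then astar j (a (- i) v) else a (- i) (astar j v).

Definition gen_op (g : genC) : V -> V :=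
  match g with inl r => a (- (r%:Z)) | inr s => astar (- (s%:Z)) end.

Definition mono_act n (var : 'I_n -> genC) (m : 'X_{1..n}) (v : V) : V :=
  foldr (fun k acc => iter (m k) (gen_op (var k)) acc) v (enum 'I_n).

Definition poly_act n (var : 'I_n -> genC) (P : {mpoly CC[n]}) (v : V) : V :=
  \sum_(m <- msupp P) P@_m *: mono_act var m v.
End Weyl.

(* partial derivative with respect to the generator g of a polynomial
   expressed in the variables var : 'I_n -> genC (chain rule) *)
Definition gen_deriv n (var : 'I_n -> genC) (g : genC) (P : {mpoly CC[n]}) :
  {mpoly CC[n]} := \sum_(k < n | var k == g) mpoly.mderiv k P.

From Pilot Require Import Defs.
From HB Require Import structures.
From mathcomp Require Import all_boot all_order all_algebra.
From mathcomp Require Import mpoly ssrcomplements zify.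
Import Order.TTheory GRing.Theory Num.Theory.
Local Open Scope ring_scope.
Set Implicit Arguments. Unset Strict Implicit. Unset Printing Implicit Defensive.

(* Two commutation rules do all the work.  If [A, G_k] = c_k for the operators
   G_k by which the variables of a polynomial Phi act, the Leibniz rule gives
   [A, Phi] = sum_k c_k dPhi/dx_k.  On vectors killed by all but finitely many
   E_{j,j}, the operator I = sum_j E_{j,j} satisfies [a(r), I] = a(r) and
   [a*(s), I] = -a*(s), hence a(r) I^k = (I+1)^k a(r) and a*(s) I^k = (I-1)^k a*(s);
   with the Whittaker conditions this yields a(i) a*(j) I^k w = lam_i mu_j I^k w
   for j >= 1.  Since E_{-i0,p} = a(i0) a*(p) and a(i0) commutes with Phi, while
   a*(p) commutes with Phi up to -dPhi/da(-p), part (1) follows; part (2) is the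
   same computation with E_{-p,j0} = a(p) a*(j0). *)


Section LinearMap.
Variables (R : pzRingType) (V : lmodType R) (f : V -> V).
Hypothesis f_lin : linear f.

Definition pack_linear : {linear V -> V} :=
  HB.pack f (GRing.isLinear.Build R V V *:%R f f_lin).

Lemma lin0 : f 0 = 0. Proof. exact: (linear0 pack_linear). Qed.
Lemma linD x y : f (x + y) = f x + f y. Proof. exact: (linearD pack_linear). Qed.
Lemma linB x y : f (x - y) = f x - f y. Proof. exact: (linearB pack_linear). Qed.
Lemma linZ c x : f (c *: x) = c *: f x. Proof. exact: (linearZZ pack_linear). Qed.
Lemma lin_sum (I : Type) (r : seq I) (P : pred I) (F : I -> V) :
  f (\sum_(i <- r | P i) F i) = \sum_(i <- r | P i) f (F i).
Proof. exact: (linear_sum pack_linear). Qed.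

Lemma lin_iter t : linear (iter t f).
Proof. by elim: t => [|t IH] c x y //=; rewrite IH f_lin. Qed.

Lemma iter_commutator (A : V -> V) (c : R) t v :
  (forall x, A (f x) = f (A x) + c *: x) ->
  A (iter t f v) = iter t f (A v) + (c *+ t) *: iter t.-1 f v.
Proof.
move=> Af; elim: t => [|t IH] /=; first by rewrite mulr0n scale0r addr0.
rewrite Af IH linD linZ -addrA; congr (_ + _).
case: t {IH} => [|t] /=; first by rewrite mulr0n !scale0r add0r mulr1n.
by rewrite -scalerDl -mulrSr.
Qed.

End LinearMap.

Lemma iter_intertwine (T : Type) (P : T -> Prop) (A F H : T -> T) :
    (forall v, P v -> P (F v)) -> (forall v, P v -> A (F v) = H (A v)) ->
  forall k v, P v -> A (iter k F v) = iter k H (A v).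
Proof.
move=> PF AF; elim=> [//|k IH] v Pv /=; rewrite AF ?IH //.
by elim: k {IH} => //= k; apply: PF.
Qed.

Section PolynomialOperator.
Variables (R : comNzRingType) (V : lmodType R) (n : nat) (G : 'I_n -> V -> V).
Hypothesis G_lin : forall k, linear (G k).

Definition mono_op (s : seq 'I_n) (m : 'X_{1..n}) (v : V) : V :=
  foldr (fun k acc => iter (m k) (G k) acc) v s.

(* [poly_act a astar var] of Defs is [poly_op] for [G k := gen_op a astar (var k)]. *)
Definition poly_op (P : {mpoly R[n]}) (v : V) : V :=
  \sum_(m <- msupp P) P@_m *: mono_op (enum 'I_n) m v.

Lemma mono_op_linear s m : linear (mono_op s m).
Proof. by elim: s => [|j s IH] c x y //=; rewrite IH lin_iter. Qed.

Lemma eq_in_mono_op s (m1 m2 : 'X_{1..n}) v :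
  {in s, m1 =1 m2} -> mono_op s m1 v = mono_op s m2 v.
Proof.
elim: s => [|j s IH] //= h; rewrite h ?mem_head // IH // => i si.
by apply: h; rewrite in_cons si orbT.
Qed.

Lemma mono_op_commutator (A : V -> V) (c : 'I_n -> R) s m v :
    (forall k x, A (G k x) = G k (A x) + c k *: x) -> uniq s ->
  A (mono_op s m v) =
    mono_op s m (A v) + \sum_(j <- s) (c j *+ m j) *: mono_op s (m - U_(j))%MM v.
Proof.
move=> AG; elim: s => [|j s IH] /=; first by rewrite big_nil addr0.
case/andP=> js us; have Gj_lin := lin_iter (G_lin j) (m j).
rewrite (iter_commutator (G_lin j) _ _ (AG j)) IH // (linD Gj_lin) (lin_sum Gj_lin) big_cons.
have mj i : i \in s -> (m - U_(j))%MM i = m i.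
  by move=> si; rewrite mnmBE mnm1E eq_sym (negbTE (memPn js i si)) subn0.
rewrite -!addrA; congr (_ + _); rewrite addrC; congr (_ + _).
  by rewrite mnmBE mnm1E eqxx subn1 (eq_in_mono_op _ mj).
rewrite !big_seq; apply: eq_bigr => i si; rewrite (linZ Gj_lin); congr (_ *: _).
by rewrite mnmBE mnm1E (negbTE (memPn js i si)) subn0.
Qed.

Lemma poly_opE_lt K P v : (msize P <= K)%N ->
  poly_op P v = \sum_(m : 'X_{1..n < K}) P@_m *: mono_op (enum 'I_n) m v.
Proof.
move=> PK; rewrite /poly_op (big_mksub 'X_{1..n < K}) ?msupp_uniq //=.
  by rewrite big_rmcond //= => m /memN_msupp_eq0 ->; rewrite scale0r.
by move=> m /msize_mdeg_lt /leq_trans; apply.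
Qed.

Lemma poly_op0 v : poly_op 0 v = 0.
Proof. by rewrite /poly_op msupp0 big_nil. Qed.

Lemma poly_opD P Q v : poly_op (P + Q) v = poly_op P v + poly_op Q v.
Proof.
pose K := maxn (msize P) (msize Q).
rewrite !(@poly_opE_lt K) ?leq_maxl ?leq_maxr ?(leq_trans (msizeD_le _ _)) //.
by rewrite -big_split; apply: eq_bigr => m _; rewrite mcoeffD scalerDl.
Qed.

Lemma poly_opZ c P v : poly_op (c *: P) v = c *: poly_op P v.
Proof.
rewrite !(@poly_opE_lt (msize P)) ?msizeZ_le // scaler_sumr.
by apply: eq_bigr => m _; rewrite mcoeffZ scalerA.
Qed.

Lemma poly_opX m v : poly_op 'X_[m] v = mono_op (enum 'I_n) m v.
Proof. by rewrite /poly_op msuppX big_seq1 mcoeffX eqxx scale1r. Qed.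

Lemma poly_op_sum (I : Type) (r : seq I) (P : pred I) (F : I -> {mpoly R[n]}) v :
  poly_op (\sum_(i <- r | P i) F i) v = \sum_(i <- r | P i) poly_op (F i) v.
Proof. exact: (big_morph (poly_op^~ v) (fun P Q => poly_opD P Q v) (poly_op0 v)). Qed.

Lemma poly_op_linear P : linear (poly_op P).
Proof.
move=> c x y; rewrite /poly_op scaler_sumr -big_split; apply: eq_bigr => m _.
by rewrite mono_op_linear scalerDr !scalerA mulrC.
Qed.

Lemma poly_op_commutator (A : V -> V) (c : 'I_n -> R) P v :
    linear A -> (forall k x, A (G k x) = G k (A x) + c k *: x) ->
  A (poly_op P v) = poly_op P (A v) + \sum_(k < n) c k *: poly_op P^`M(k) v.
Proof.
move=> A_lin AG; elim/mpolyind: P => [|c0 m P _ _ IH].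
  by rewrite !poly_op0 (lin0 A_lin) big1 ?addr0 // => k _; rewrite mderiv0 poly_op0 scaler0.
rewrite !poly_opD !poly_opZ !poly_opX (linD A_lin) (linZ A_lin) IH.
rewrite (mono_op_commutator _ _ AG (enum_uniq _)) big_enum /=.
under [in RHS]eq_bigr => k _ do
  rewrite mderivD mderivZ mderivX poly_opD !poly_opZ poly_opX scalerDr.
rewrite big_split /= scalerDr -!addrA; congr (_ + _).
rewrite addrCA; congr (_ + _).
rewrite scaler_sumr; apply: eq_big => [k|k _]; first by rewrite inE.
by rewrite !scalerA [in RHS]mulrCA mulr_natr.
Qed.

Lemma poly_op_commutator_indicator (A : V -> V) (e : R) (b : pred 'I_n) P v :
    linear A -> (forall k x, A (G k x) = G k (A x) + e *: ((b k)%:R *: x)) ->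
  A (poly_op P v) = poly_op P (A v) + e *: poly_op (\sum_(k < n | b k) P^`M(k)) v.
Proof.
move=> A_lin AG.
have AG' k x : A (G k x) = G k (A x) + (e * (b k)%:R) *: x by rewrite AG scalerA.
rewrite (poly_op_commutator _ _ A_lin AG') poly_op_sum scaler_sumr.
congr (_ + _); rewrite [RHS]big_mkcond; apply: eq_bigr => k _.
by case: (b k); rewrite ?mulr1 ?mulr0 ?scale0r.
Qed.

Lemma poly_op_commute (A : V -> V) P v :
  linear A -> (forall k x, A (G k x) = G k (A x)) -> A (poly_op P v) = poly_op P (A v).
Proof.
move=> A_lin AG; rewrite (@poly_op_commutator_indicator A 0 pred0) //.
  by rewrite scale0r addr0.
by move=> k x; rewrite AG scale0r addr0.
Qed.

End PolynomialOperator.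

Lemma scale_indicator_eq (R : pzRingType) (U : lmodType R) (T : eqType) (F : T -> U) x y :
  (x == y)%:R *: F x = (x == y)%:R *: F y.
Proof. by case: eqVneq => [->|]; rewrite ?scale0r. Qed.

Lemma sum_centered_indicator (R : pzRingType) (U : lmodType R) (N : nat) (t : int) (x : U) :
  `|t| <= N%:Z -> \sum_(i < (2 * N).+1) ((i%:Z - N%:Z == t)%:R : R) *: x = x.
Proof.
move=> tN; have tN_lt : (absz (N%:Z + t)%R < (2 * N).+1)%N by lia.
rewrite (bigD1 (Ordinal tN_lt)) //= big1 ?addr0.
  by rewrite (_ : (_ == t) = true) ?scale1r //; apply/eqP; lia.
move=> i ne_i; rewrite (_ : (_ == t) = false) ?scale0r //; apply/negbTE/eqP => it.
by move/eqP: ne_i; apply; apply: val_inj => /=; lia.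
Qed.

Section Weyl.
Variables (V : lmodType CC) (a astar : int -> V -> V).
Hypotheses (a_lin : forall r, linear (a r)) (astar_lin : forall r, linear (astar r)).
Hypothesis a_comm : forall r s v, a r (a s v) = a s (a r v).
Hypothesis astar_comm : forall r s v, astar r (astar s v) = astar s (astar r v).
Hypothesis a_astar :
  forall r s v, a r (astar s v) - astar s (a r v) = (r + s == 0)%:R *: v.

Local Notation E j := (Eop a astar j j).

Lemma a_astarE r s v : a r (astar s v) = astar s (a r v) + (s == - r)%:R *: v.
Proof. by apply/eqP; rewrite addrC -subr_eq a_astar addrC addr_eq0. Qed.

Lemma astar_aE r s v : astar s (a r v) = a r (astar s v) - (s == - r)%:R *: v.
Proof. by rewrite a_astarE addrK. Qed.

Lemma Eop_pos i j v : 0 < j -> Eop a astar i j v = a (- i) (astar j v).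
Proof. by move=> j_gt0; rewrite /Eop [j <= 0]leNgt j_gt0 andbF. Qed.

Lemma Eop_linear i j : linear (Eop a astar i j).
Proof.
move=> c x y; rewrite /Eop; case: ifP => _.
  by rewrite (a_lin (- i) c x y) astar_lin.
by rewrite (astar_lin j c x y) a_lin.
Qed.

Lemma a_Ediag r j x : a r (E j x) = E j (a r x) + (j == - r)%:R *: a r x.
Proof.
rewrite /Eop; case: ifP => _.
  rewrite a_astarE (a_comm r (- j)); congr (_ + _).
  by rewrite (scale_indicator_eq (fun t => a (- t) x)) opprK.
rewrite (a_comm r (- j)) a_astarE (linD (a_lin _)) (linZ (a_lin _)); congr (_ + _).
by rewrite (scale_indicator_eq (fun t => a (- t) x)) opprK.
Qed.

Lemma astar_Ediag s j x : astar s (E j x) = E j (astar s x) - (j == s)%:R *: astar s x.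
Proof.
rewrite /Eop; case: ifP => _.
  rewrite (astar_comm s j) astar_aE opprK (linB (astar_lin _)) (linZ (astar_lin _)).
  by rewrite eq_sym (scale_indicator_eq (astar ^~ x)).
rewrite astar_aE (astar_comm s j) opprK; congr (_ - _).
by rewrite eq_sym (scale_indicator_eq (astar ^~ x)).
Qed.

Lemma Ediag_comm i j x : E i (E j x) = E j (E i x).
Proof.
rewrite {1}/Eop [E i x]/Eop; case: ifP => _.
  rewrite a_Ediag opprK (linD (astar_lin _)) (linZ (astar_lin _)) astar_Ediag.
  by rewrite subrK.
rewrite astar_Ediag (linB (a_lin _)) (linZ (a_lin _)) a_Ediag opprK.
by rewrite addrK.
Qed.

Lemma gen_op_linear g : linear (gen_op a astar g).
Proof. by case: g => r /=. Qed.

Lemma a_gen_op (r : nat) g x :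
  a r%:Z (gen_op a astar g x) = gen_op a astar g (a r%:Z x) + (g == inr r)%:R *: x.
Proof.
case: g => [t|t] /=; first by rewrite a_comm scale0r addr0.
by rewrite a_astarE eqr_opp eqz_nat.
Qed.

Lemma astar_gen_op (s : nat) g x :
  astar s%:Z (gen_op a astar g x) = gen_op a astar g (astar s%:Z x) - (g == inl s)%:R *: x.
Proof.
case: g => [t|t] /=; last by rewrite astar_comm scale0r subr0.
by rewrite astar_aE opprK eqz_nat eq_sym.
Qed.

Definition Ediag_vanish (N : nat) (v : V) := forall j : int, N%:Z < `|j| -> E j v = 0.

Lemma Ediag_vanish_le N N' v : (N <= N')%N -> Ediag_vanish N v -> Ediag_vanish N' v.
Proof. by move=> NN' vN j jN; apply: vN; lia. Qed.

Lemma Ediag_vanish_a N r v : `|r| <= N%:Z -> Ediag_vanish N v -> Ediag_vanish N (a r v).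
Proof.
move=> rN vN j jN; have := a_Ediag r j v.
rewrite vN // (lin0 (a_lin r)) (_ : (j == - r) = false) ?scale0r ?addr0 => [->//|].
by apply/negbTE/eqP => jr; lia.
Qed.

Lemma Ediag_vanish_astar N s v :
  `|s| <= N%:Z -> Ediag_vanish N v -> Ediag_vanish N (astar s v).
Proof.
move=> sN vN j jN; have := astar_Ediag s j v.
rewrite vN // (lin0 (astar_lin s)) (_ : (j == s) = false) ?scale0r ?subr0 => [->//|].
by apply/negbTE/eqP => js; lia.
Qed.

Lemma Ediag_vanish_lin N c u v :
  Ediag_vanish N u -> Ediag_vanish N v -> Ediag_vanish N (c *: u + v).
Proof. by move=> uN vN j jN; rewrite Eop_linear uN // vN // scaler0 addr0. Qed.

Lemma Ediag_vanish_Ediag N i v : Ediag_vanish N v -> Ediag_vanish N (E i v).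
Proof. by move=> vN j jN; rewrite Ediag_comm vN // (lin0 (Eop_linear _ _)). Qed.

Section NumberOperator.
Variable I : V -> V.
Hypothesis I_sum : forall v N,
  Ediag_vanish N v -> I v = \sum_(i < (2 * N).+1) E (i%:Z - N%:Z) v.

(* I is only specified on these vectors, where the sum defining it is finite. *)
Definition Ediag_finite v := exists N, Ediag_vanish N v.

Lemma Ediag_finite_a r v : Ediag_finite v -> Ediag_finite (a r v).
Proof.
case=> N vN; exists (N + absz r)%N; apply: Ediag_vanish_a; first lia.
by apply: Ediag_vanish_le vN; lia.
Qed.

Lemma Ediag_finite_astar s v : Ediag_finite v -> Ediag_finite (astar s v).
Proof.
case=> N vN; exists (N + absz s)%N; apply: Ediag_vanish_astar; first lia.
by apply: Ediag_vanish_le vN; lia.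
Qed.

Lemma Ediag_finite_lin c u v :
  Ediag_finite u -> Ediag_finite v -> Ediag_finite (c *: u + v).
Proof.
case=> N1 uN1 [N2 vN2]; exists (maxn N1 N2); apply: Ediag_vanish_lin.
  by apply: Ediag_vanish_le uN1; apply: leq_maxl.
by apply: Ediag_vanish_le vN2; apply: leq_maxr.
Qed.

Lemma Ediag_finite_I v : Ediag_finite v -> Ediag_finite (I v).
Proof.
case=> N vN; exists N; rewrite (I_sum vN) => j jN.
rewrite (lin_sum (Eop_linear _ _)) big1 // => i _.
exact: Ediag_vanish_Ediag vN j jN.
Qed.

Lemma Ediag_finite_Iadd v : Ediag_finite v -> Ediag_finite (I v + v).
Proof.
by move=> fv; rewrite -[I v]scale1r; apply: Ediag_finite_lin => //; apply: Ediag_finite_I.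
Qed.

Lemma Ediag_finite_Isub v : Ediag_finite v -> Ediag_finite (I v - v).
Proof.
by move=> fv; rewrite addrC -scaleN1r; apply: Ediag_finite_lin => //; apply: Ediag_finite_I.
Qed.

Lemma I_scale c v : Ediag_finite v -> I (c *: v) = c *: I v.
Proof.
case=> N vN; have cvN : Ediag_vanish N (c *: v).
  by move=> j jN; rewrite (linZ (Eop_linear _ _)) vN // scaler0.
rewrite (I_sum vN) (I_sum cvN) scaler_sumr; apply: eq_bigr => i _.
exact: (linZ (Eop_linear _ _)).
Qed.

Lemma a_I r v : Ediag_finite v -> a r (I v) = I (a r v) + a r v.
Proof.
case=> N0 vN0; pose N := (N0 + absz r)%N.
have vN : Ediag_vanish N v by apply: Ediag_vanish_le vN0; lia.
have rN : `|r| <= N%:Z by lia.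
rewrite (I_sum vN) (I_sum (Ediag_vanish_a rN vN)) (lin_sum (a_lin r)).
under eq_bigr => i _ do rewrite a_Ediag.
by rewrite big_split /= sum_centered_indicator ?normrN.
Qed.

Lemma astar_I s v : Ediag_finite v -> astar s (I v) = I (astar s v) - astar s v.
Proof.
case=> N0 vN0; pose N := (N0 + absz s)%N.
have vN : Ediag_vanish N v by apply: Ediag_vanish_le vN0; lia.
have sN : `|s| <= N%:Z by lia.
rewrite (I_sum vN) (I_sum (Ediag_vanish_astar sN vN)) (lin_sum (astar_lin s)).
under eq_bigr => i _ do rewrite astar_Ediag.
by rewrite sumrB sum_centered_indicator.
Qed.

Lemma a_iterI r k v :
  Ediag_finite v -> a r (iter k I v) = iter k (fun u => I u + u) (a r v).
Proof. exact: iter_intertwine Ediag_finite_I (fun u fu => a_I r fu) k v. Qed.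

Lemma astar_iterI s k v :
  Ediag_finite v -> astar s (iter k I v) = iter k (fun u => I u - u) (astar s v).
Proof. exact: iter_intertwine Ediag_finite_I (fun u fu => astar_I s fu) k v. Qed.

Lemma a_iterIsub r k v :
  Ediag_finite v -> a r (iter k (fun u => I u - u) v) = iter k I (a r v).
Proof.
apply: iter_intertwine Ediag_finite_Isub _ k v => u fu.
by rewrite (linB (a_lin r)) a_I // addrK.
Qed.

Lemma iterI_scale c k v : Ediag_finite v -> c *: iter k I v = iter k I (c *: v).
Proof. exact: iter_intertwine Ediag_finite_I (fun u fu => esym (I_scale c fu)) k v. Qed.

Lemma iterIadd_scale c k v : Ediag_finite v ->
  c *: iter k (fun u => I u + u) v = iter k (fun u => I u + u) (c *: v).
Proof.
apply: iter_intertwine Ediag_finite_Iadd _ k v => u fu.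
by rewrite scalerDr I_scale.
Qed.

Lemma iterIsub_scale c k v : Ediag_finite v ->
  c *: iter k (fun u => I u - u) v = iter k (fun u => I u - u) (c *: v).
Proof.
apply: iter_intertwine Ediag_finite_Isub _ k v => u fu.
by rewrite scalerBr I_scale.
Qed.

Section WhittakerVector.
Variables (n m : nat) (lam mu : nat -> CC) (w : V).
Hypothesis lam_supp : forall i, (n < i)%N -> lam i = 0.
Hypothesis mu_supp : forall j, (m < j)%N -> mu j = 0.
Hypothesis a_w : forall i : nat, a i%:Z w = lam i *: w.
Hypothesis astar_w : forall j : nat, (1 <= j)%N -> astar j%:Z w = mu j *: w.

Lemma whittaker_vanish : Ediag_vanish (n + m) w.
Proof.
move=> [t|t] tN; rewrite /Eop.
  rewrite [Posz t <= 0]leNgt (_ : 0 < Posz t) ?andbF; last lia.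
  by rewrite astar_w ?mu_supp ?scale0r ?(lin0 (a_lin _)) //; lia.
rewrite (_ : (0 <= - Negz t) && (Negz t <= 0) = true); last by apply/andP; split; lia.
by rewrite NegzE opprK a_w lam_supp ?scale0r ?(lin0 (astar_lin _)) //; lia.
Qed.

Lemma whittaker_finite : Ediag_finite w.
Proof. by exists (n + m)%N; apply: whittaker_vanish. Qed.

Lemma a_iterI_whittaker i k :
  a i%:Z (iter k I w) = lam i *: iter k (fun u => I u + u) w.
Proof.
by have fw := whittaker_finite; rewrite a_iterI // a_w iterIadd_scale.
Qed.

Lemma astar_iterI_whittaker j k : (1 <= j)%N ->
  astar j%:Z (iter k I w) = mu j *: iter k (fun u => I u - u) w.
Proof.
move=> j_gt0; have fw := whittaker_finite.
by rewrite astar_iterI // astar_w // iterIsub_scale.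
Qed.

Lemma a_astar_iterI_whittaker i j k : (1 <= j)%N ->
  a i%:Z (astar j%:Z (iter k I w)) = (lam i * mu j) *: iter k I w.
Proof.
move=> j_gt0; have fw := whittaker_finite.
rewrite astar_iterI // a_iterIsub; last exact: Ediag_finite_astar.
rewrite a_astarE a_w (linZ (astar_lin _)) astar_w // scalerA.
rewrite (_ : (j%:Z == - i%:Z) = false) ?scale0r ?addr0; last by apply/negbTE/eqP; lia.
by rewrite iterI_scale.
Qed.

Lemma Ehat_lowering nv (var : 'I_nv -> genC) (Phi : {mpoly CC[nv]}) i0 p k :
    lam i0 != 0 -> (1 <= p)%N -> (forall x, var x != inr i0) ->
  (lam i0)^-1 *: (lam i0 * mu p *: poly_act a astar var Phi (iter k I w)
                  - Eop a astar (- i0%:Z) p%:Z (poly_act a astar var Phi (iter k I w)))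
  = poly_act a astar var (gen_deriv var (inl p) Phi) (iter k (fun u => I u + u) w).
Proof.
move=> lam0 p_gt0 var_i0.
pose G l := gen_op a astar (var l).
have G_lin l : linear (G l) := gen_op_linear (var l).
have a_G l x : a i0%:Z (G l x) = G l (a i0%:Z x).
  by rewrite /G a_gen_op (negbTE (var_i0 l)) scale0r addr0.
have astar_G l x :
    astar p%:Z (G l x) = G l (astar p%:Z x) + (-1) *: ((var l == inl p)%:R *: x).
  by rewrite /G astar_gen_op scaleN1r.
change (poly_act a astar var) with (poly_op G).
rewrite Eop_pos ?opprK; last lia.
rewrite (poly_op_commutator_indicator G_lin _ _ (astar_lin _) astar_G).
rewrite (linD (a_lin _)) (linZ (a_lin _)) !(poly_op_commute G_lin _ _ (a_lin _) a_G).
rewrite a_astar_iterI_whittaker // a_iterI_whittaker // !(linZ (poly_op_linear G_lin _)).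
by rewrite opprD addrA subrr add0r scaleN1r opprK scalerA mulVf // scale1r.
Qed.

(* Only a(-j0) fails to commute with a*(j0), so Phi need not be a polynomial in
   the a*(-s) alone. *)
Lemma Ehat_raising nv (var : 'I_nv -> genC) (Phi : {mpoly CC[nv]}) j0 p k :
    mu j0 != 0 -> (1 <= j0)%N -> (forall x, var x != inl j0) ->
  (mu j0)^-1 *: (Eop a astar (- p%:Z) j0%:Z (poly_act a astar var Phi (iter k I w))
                 - lam p * mu j0 *: poly_act a astar var Phi (iter k I w))
  = poly_act a astar var (gen_deriv var (inr p) Phi) (iter k (fun u => I u - u) w).
Proof.
move=> mu0 j0_gt0 var_j0.
pose G l := gen_op a astar (var l).
have G_lin l : linear (G l) := gen_op_linear (var l).
have astar_G l x : astar j0%:Z (G l x) = G l (astar j0%:Z x).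
  by rewrite /G astar_gen_op (negbTE (var_j0 l)) scale0r subr0.
have a_G l x : a p%:Z (G l x) = G l (a p%:Z x) + 1 *: ((var l == inr p)%:R *: x).
  by rewrite /G a_gen_op scale1r.
change (poly_act a astar var) with (poly_op G).
rewrite Eop_pos ?opprK; last lia.
rewrite (poly_op_commute G_lin _ _ (astar_lin _) astar_G).
rewrite (poly_op_commutator_indicator G_lin _ _ (a_lin _) a_G).
rewrite a_astar_iterI_whittaker // astar_iterI_whittaker // !(linZ (poly_op_linear G_lin _)).
by rewrite addrAC subrr add0r scale1r scalerA mulVf // scale1r.
Qed.

End WhittakerVector.
End NumberOperator.
End Weyl.
Theorem lemma7p2
  (n m : nat) (hm : (1 <= m)%N)
  (lam mu : nat -> CC)
  (hlam : forall i : nat, (n < i)%N -> lam i = 0)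
  (hmu : forall j : nat, (m < j)%N -> mu j = 0)
  (V : lmodType CC) (a astar : int -> V -> V)
  (ha_lin : forall r, linear (a r)) (hs_lin : forall r, linear (astar r))
  (haa : forall r s v, a r (a s v) = a s (a r v))
  (hss : forall r s v, astar r (astar s v) = astar s (astar r v))
  (has : forall r s v, a r (astar s v) - astar s (a r v) = (r + s == 0)%:R *: v)
  (w : V)
  (hwa : forall i : nat, a i%:Z w = lam i *: w)
  (hws : forall j : nat, (1 <= j)%N -> astar j%:Z w = mu j *: w)
  (I : V -> V)
  (hI : forall (v : V) (N : nat),
      (forall j : int, N%:Z < `|j| -> Eop a astar j j v = 0) ->
      I v = \sum_(i < (2 * N).+1) Eop a astar (i%:Z - N%:Z) (i%:Z - N%:Z) v)
  (i0 j0 : nat) (hj0 : (1 <= j0)%N)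
  (hli0 : lam i0 != 0) (hmj0 : mu j0 != 0)
  (k : nat) :
  (forall (nv : nat) (var : 'I_nv -> genC) (Phi : {mpoly CC[nv]}),
     (forall x, match var x with inl r => (0 < r)%N | inr s => s != i0 end) ->
     forall p : nat, (1 <= p)%N ->
     (lam i0)^-1 *: (lam i0 * mu p *: poly_act a astar var Phi (iter k I w)
                     - Eop a astar (- i0%:Z) p%:Z (poly_act a astar var Phi (iter k I w)))
     = poly_act a astar var (gen_deriv var (inl p) Phi) (iter k (fun v => I v + v) w))
  /\
  (forall (nv : nat) (var : 'I_nv -> genC) (Phi : {mpoly CC[nv]}),
     (forall x, exists2 s, var x = inr s & s != i0) ->
     forall p : nat,
     (mu j0)^-1 *: (Eop a astar (- p%:Z) j0%:Z (poly_act a astar var Phi (iter k I w))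
                    - lam p * mu j0 *: poly_act a astar var Phi (iter k I w))
     = poly_act a astar var (gen_deriv var (inr p) Phi) (iter k (fun v => I v - v) w)).
Proof.
split=> nv var Phi var_gen p.
  move=> p_gt0; have var_i0 x : var x != inr i0.
    by move: (var_gen x); case: (var x) => // s si0; apply: contraNneq si0 => -[->].
  exact: (Ehat_lowering ha_lin hs_lin haa hss has hI hlam hmu hwa hws).
have var_j0 x : var x != inl j0 by have [s -> _] := var_gen x.
exact: (Ehat_raising ha_lin hs_lin haa hss has hI hlam hmu hwa hws).
Qed.
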